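(* Let $\vec X=(X_1,\ldots,X_t)\in(\mathcal{H}_m^{\otimes n})^t$ satisfy $\sum_{i=1}^tX_i=\mathrm{id}$, and let $\mathcal{R}(\vec X)=\arg\min\{\|\vec X-\vec P\|'^2_2:\vec P\text{ is a sub-POVM}\}$. Then $$\|\mathcal{R}(\vec X)-\vec X\|'^2_2\le\frac{3(t+1)}{m^n}\sum_{i=1}^t\mathrm{Tr}\,\zeta(X_i)+6\Big(\frac{t}{m^n}\sum_{i=1}^t\mathrm{Tr}\,\zeta(X_i)\Big)^{1/2}.$$
   Context: $\mathcal{H}_m^{\otimes n}$ denotes Hermitian operators on $(\mathbb{C}^m)^{\otimes n}$. A sub-POVM is a tuple $(P_1,\ldots,P_t)$ of positive semidefinite operators with $\sum_iP_i\le\mathrm{id}$. For tuples, $\|\vec Y\|'^2_2=\sum_{i=1}^t\frac1{m^n}\mathrm{Tr}Y_i^\dagger Y_i$. $\zeta:\mathbb{R}\to\mathbb{R}$ is $\zeta(x)=x^2$ for $x\le0$ and $0$ otherwise, applied to Hermitian matrices through the spectral decomposition. *)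

From HB Require Import structures.
From mathcomp Require Import all_boot all_order all_algebra.
From mathcomp Require Import complex.
From mathcomp Require Import reals.
Set Implicit Arguments. Unset Strict Implicit. Unset Printing Implicit Defensive.
Import Order.TTheory GRing.Theory Num.Theory.
Local Open Scope ring_scope.
Local Open Scope sesquilinear_scope.
Local Open Scope complex_scope.

Section Defs.
Variable R : realType.
Local Notation C := (R[i]).

Definition zeta (x : R) : R := if x <= 0 then x ^+ 2 else 0.

Definition zeta_mx (N : nat) (A : 'M[C]_N) : 'M[C]_N :=
  invmx (spectralmx A)
  *m diag_mx (\row_j ((zeta (complex.Re (spectral_diag A 0 j)))%:C))
  *m spectralmx A.

Definition psdmx (N : nat) (A : 'M[C]_N) : Prop :=
  A \is hermsymmx /\ forall v : 'rV[C]_N, 0 <= (v *m A *m v ^t*) 0 0.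

Definition subPOVM (N t : nat) (P : 'I_t -> 'M[C]_N) : Prop :=
  (forall i, psdmx (P i)) /\ psdmx (1%:M - \sum_(i < t) P i).

Definition normsq' (N t : nat) (Y : 'I_t -> 'M[C]_N) : R :=
  \sum_(i < t) complex.Re (\tr ((Y i) ^t* *m Y i)) / N%:R.

Definition tup_sub (N t : nat) (Y Z : 'I_t -> 'M[C]_N) : 'I_t -> 'M[C]_N :=
  fun i => Y i - Z i.

Definition is_argmin_subPOVM (N t : nat) (X P : 'I_t -> 'M[C]_N) : Prop :=
  subPOVM P /\
  forall Q : 'I_t -> 'M[C]_N, subPOVM Q ->
    normsq' (tup_sub X P) <= normsq' (tup_sub X Q).

End Defs.

(* Split X_i = X_i^+ - X_i^- into positive and negative parts, so that
   Tr zeta(X_i) = ||X_i^-||_2^2 and M := sum_i X_i^- = sum_i X_i^+ - id >= 0.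
   Normalising the positive parts, Q_i := (id + M)^(-1/2) X_i^+ (id + M)^(-1/2),
   gives a POVM.  In an eigenbasis of M with eigenvalues mu_j and
   r_j := sqrt (1 + mu_j) we have (X_i^+ - Q_i)_jk = (r_j r_k - 1) (Q_i)_jk,
   (r_j r_k - 1)^2 <= (mu_j^2 + mu_k^2) / 2, and sum_i sum_j |(Q_i)_jk|^2 <= 1
   because Q_i^2 <= Q_i; hence sum_i ||X_i^+ - Q_i||_2^2 <= ||M||_2^2
   <= t sum_i ||X_i^-||_2^2 by Cauchy-Schwarz. *)

From HB Require Import structures.
From mathcomp Require Import all_boot all_order all_algebra.
From mathcomp Require Import complex.
From mathcomp Require Import reals.
From mathcomp Require Import ring lra.
Import Order.TTheory GRing.Theory Num.Theory.
Local Open Scope ring_scope.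
Local Open Scope sesquilinear_scope.
Local Open Scope complex_scope.

Set Implicit Arguments. Unset Strict Implicit. Unset Printing Implicit Defensive.

Section ConjTranspose.
Variable C : numClosedFieldType.
Implicit Types (m n p : nat).

Lemma trmxC_mul m n p (A : 'M[C]_(m, n)) (B : 'M[C]_(n, p)) :
  (A *m B)^t* = B^t* *m A^t*.
Proof. by rewrite trmx_mul map_mxM. Qed.

Lemma trmxCD m n (A B : 'M[C]_(m, n)) : (A + B)^t* = A^t* + B^t*.
Proof. by rewrite raddfD /= map_mxD. Qed.

Lemma trmxCN m n (A : 'M[C]_(m, n)) : (- A)^t* = - A^t*.
Proof. by apply/matrixP => i j; rewrite !mxE rmorphN. Qed.

Lemma trmxC_unitaryV n (P : 'M[C]_n) : P \is unitarymx -> P^t* *m P = 1%:M.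
Proof. by rewrite -trmxC_unitary => /unitarymxP; rewrite trmxCK. Qed.

Lemma hermP n (A : 'M[C]_n) : reflect (A = A^t*) (A \is hermsymmx).
Proof. by rewrite is_hermitianmxE expr0 scale1r; apply: eqP. Qed.

Lemma herm0 n : (0 : 'M[C]_n) \is hermsymmx.
Proof. by apply/hermP; rewrite trmx0 map_mx0. Qed.

Lemma hermD n (A B : 'M[C]_n) :
  A \is hermsymmx -> B \is hermsymmx -> A + B \is hermsymmx.
Proof. by move=> /hermP HA /hermP HB; apply/hermP; rewrite trmxCD -HA -HB. Qed.

Lemma herm_congr m n (B : 'M[C]_(m, n)) (A : 'M[C]_n) :
  A \is hermsymmx -> B *m A *m B^t* \is hermsymmx.
Proof. by move=> /hermP HA; apply/hermP; rewrite !trmxC_mul trmxCK -HA mulmxA. Qed.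

Lemma spectral_hermE n (A : 'M[C]_n) : A \is hermsymmx ->
  A = (spectralmx A)^t* *m diag_mx (spectral_diag A) *m spectralmx A.
Proof.
move=> /hermitian_normalmx /orthomx_spectralP {1}->.
by rewrite invmx_unitary // spectral_unitarymx.
Qed.

End ConjTranspose.

Definition pospart {R : realType} (x : R) := if x <= 0 then 0 else x.
Definition negpart {R : realType} (x : R) := if x <= 0 then - x else 0.

Section Complex.
Variable R : realType.
Local Notation C := R[i].
Implicit Types (m n t : nat) (x y : R) (z : C).

Lemma psdmx0 n : psdmx (0 : 'M[C]_n).
Proof. by split=> [|v]; rewrite ?herm0 // mulmx0 mul0mx mxE. Qed.

Lemma psdmxD n (A B : 'M[C]_n) : psdmx A -> psdmx B -> psdmx (A + B).
Proof.
move=> [Ah Ap] [Bh Bp]; split=> [|v]; first exact: hermD Ah Bh.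
by rewrite mulmxDr mulmxDl mxE addr_ge0.
Qed.

Lemma psdmx_sum n (I : finType) (P : pred I) (A : I -> 'M[C]_n) :
  (forall i, P i -> psdmx (A i)) -> psdmx (\sum_(i | P i) A i).
Proof.
by move=> HA; apply: (big_ind (@psdmx R n)); [exact: psdmx0 | exact: psdmxD |].
Qed.

Lemma psdmx_congr m n (B : 'M[C]_(m, n)) (A : 'M[C]_n) :
  psdmx A -> psdmx (B *m A *m B^t*).
Proof.
move=> [Ah Ap]; split=> [|v]; first exact: herm_congr.
by have := Ap (v *m B); rewrite trmxC_mul !mulmxA.
Qed.

Lemma psdmx_diag_ge0 n (A : 'M[C]_n) j : psdmx A -> 0 <= A j j.
Proof.
case=> _ /(_ (delta_mx 0 j)); rewrite -rowE mxE (bigD1 j) //= big1 ?addr0.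
  by rewrite !mxE !eqxx /= conjC1 mulr1.
by move=> k /negbTE kj; rewrite !mxE kj andbF conjC0 mulr0.
Qed.

Definition rdiag n (x : 'I_n -> R) : 'M[C]_n := diag_mx (\row_j (x j)%:C).

Lemma rdiagM n (x y : 'I_n -> R) : rdiag x *m rdiag y = rdiag (fun j => x j * y j).
Proof. by rewrite mulmx_diag; congr diag_mx; apply/matrixP => i j; rewrite !mxE rmorphM. Qed.

Lemma rdiagD n (x y : 'I_n -> R) : rdiag x + rdiag y = rdiag (fun j => x j + y j).
Proof. by apply/matrixP => i j; rewrite !mxE -mulrnDl rmorphD. Qed.

Lemma rdiagB n (x y : 'I_n -> R) : rdiag x - rdiag y = rdiag (fun j => x j - y j).
Proof. by apply/matrixP => i j; rewrite !mxE -mulrnBl rmorphB. Qed.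

Lemma rdiag1 n : rdiag (fun _ : 'I_n => 1) = 1%:M.
Proof. by rewrite -diag_const_mx; congr diag_mx; apply/matrixP => i j; rewrite !mxE. Qed.

Lemma eq_rdiag n (x y : 'I_n -> R) : (forall j, x j = y j) -> rdiag x = rdiag y.
Proof. by move=> xy; apply/matrixP => i j; rewrite !mxE xy. Qed.

Lemma trmxC_rdiag n (x : 'I_n -> R) : (rdiag x)^t* = rdiag x.
Proof.
apply/matrixP => i j; rewrite !mxE eq_sym.
by case: eqP => [->|_]; rewrite ?mulr1n ?mulr0n ?conjC0 //; exact: conjc_real.
Qed.

Lemma psdmx_rdiag n (x : 'I_n -> R) : (forall j, 0 <= x j) -> psdmx (rdiag x).
Proof.
move=> x0; split=> [|v]; first by apply/hermP; rewrite trmxC_rdiag.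
rewrite mul_mx_diag mxE; apply: sumr_ge0 => k _.
by rewrite !mxE mulrAC mulr_ge0 ?mul_conjC_ge0 ?ler0c.
Qed.

Definition eigval n (A : 'M[C]_n) j : R := complex.Re (spectral_diag A 0 j).

(* f(A) by functional calculus; only meaningful for Hermitian A, as [eigval]
   keeps the real parts of the eigenvalues. *)
Definition mxfun (f : R -> R) n (A : 'M[C]_n) : 'M[C]_n :=
  (spectralmx A)^t* *m rdiag (fun j => f (eigval A j)) *m spectralmx A.

Section FunctionalCalculus.
Variables (n : nat) (A : 'M[C]_n).
Local Notation V := (spectralmx A).
Let Vu : V \is unitarymx := spectral_unitarymx A.
Implicit Types f g : R -> R.

Lemma mxfun_diag f : V *m mxfun f A *m V^t* = rdiag (fun j => f (eigval A j)).
Proof. by rewrite /mxfun !mulmxA (unitarymxP Vu) mul1mx (mulmxtVK _ Vu). Qed.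

Lemma eq_mxfun f g :
  (forall j, f (eigval A j) = g (eigval A j)) -> mxfun f A = mxfun g A.
Proof. by move=> fg; rewrite /mxfun (eq_rdiag fg). Qed.

Lemma mxfunM f g : mxfun f A *m mxfun g A = mxfun (fun x => f x * g x) A.
Proof.
by rewrite /mxfun !mulmxA (mulmxtVK _ Vu) -(mulmxA _ (rdiag _) (rdiag _)) rdiagM.
Qed.

Lemma mxfunD f g : mxfun f A + mxfun g A = mxfun (fun x => f x + g x) A.
Proof. by rewrite /mxfun -mulmxDl -mulmxDr rdiagD. Qed.

Lemma mxfunB f g : mxfun f A - mxfun g A = mxfun (fun x => f x - g x) A.
Proof. by rewrite /mxfun -mulmxBl -mulmxBr rdiagB. Qed.

Lemma mxfun1 : mxfun (fun => 1) A = 1%:M.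
Proof. by rewrite /mxfun rdiag1 mulmx1 (trmxC_unitaryV Vu). Qed.

Lemma mxfun_id : A \is hermsymmx -> mxfun id A = A.
Proof.
move=> Ah; have eig : \row_j (eigval A j)%:C = spectral_diag A.
  apply/matrixP => i j; rewrite ord1 mxE.
  by have /mxOverP /(_ 0 j) /RRe_real := hermitian_spectral_diag_real Ah.
by rewrite [RHS](spectral_hermE Ah) /mxfun /rdiag eig.
Qed.

Lemma psdmx_mxfun f : (forall j, 0 <= f (eigval A j)) -> psdmx (mxfun f A).
Proof. by move=> /psdmx_rdiag /(psdmx_congr (V^t*)); rewrite trmxCK. Qed.

Lemma mxfun_ge0 f j : psdmx (mxfun f A) -> 0 <= f (eigval A j).
Proof.
move=> /(psdmx_congr V) /(psdmx_diag_ge0 j).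
by rewrite mxfun_diag mxE eqxx mulr1n mxE ler0c.
Qed.

End FunctionalCalculus.

Definition sqnormc (z : C) : R := complex.Re z ^+ 2 + complex.Im z ^+ 2.

Lemma Re_conj_mul z : complex.Re ((z^*)%R * z) = sqnormc z.
Proof. by case: z => a b; rewrite /sqnormc /=; lra. Qed.

Lemma sqnormc_conj z : sqnormc (z^*)%R = sqnormc z.
Proof. by case: z => a b; rewrite /sqnormc /=; lra. Qed.

Lemma sqnormc_ge0 z : 0 <= sqnormc z.
Proof. by rewrite addr_ge0 ?sqr_ge0. Qed.

Lemma sqnormc_real x : sqnormc x%:C = x ^+ 2.
Proof. by rewrite /sqnormc /=; lra. Qed.

Lemma sqnormc_realM x z : sqnormc (x%:C * z) = x ^+ 2 * sqnormc z.
Proof. by case: z => a b; rewrite /sqnormc /=; lra. Qed.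

Lemma sqnormcB_le (a b : C) : sqnormc (a - b) <= 2 * sqnormc a + 2 * sqnormc b.
Proof.
case: a b => [a1 a2] [b1 b2]; rewrite /sqnormc /=.
by have := sqr_ge0 (a1 + b1); have := sqr_ge0 (a2 + b2); rewrite !expr2; nra.
Qed.

Lemma sqr_sum_le t (a : 'I_t -> R) :
  (\sum_i a i) ^+ 2 <= t%:R * \sum_i a i ^+ 2.
Proof.
have dev : \sum_i \sum_l (a i - a l) ^+ 2
    = \sum_i \sum_l (a i ^+ 2 + a l ^+ 2) - 2 * \sum_i \sum_l a i * a l.
  rewrite mulr_sumr -sumrB; apply: eq_bigr => i _; rewrite mulr_sumr -sumrB.
  by apply: eq_bigr => l _; ring.
have sq2 : \sum_i \sum_l (a i ^+ 2 + a l ^+ 2) = 2 * (t%:R * \sum_i a i ^+ 2).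
  under eq_bigr => i _ do rewrite big_split /= sumr_const card_ord.
  by rewrite big_split /= sumr_const card_ord sumrMnl -mulr_natl; ring.
have sq : \sum_i \sum_l a i * a l = (\sum_i a i) ^+ 2.
  by rewrite expr2 mulr_suml; apply: eq_bigr => i _; rewrite mulr_sumr.
have : 0 <= \sum_i \sum_l (a i - a l) ^+ 2.
  by do 2 apply: sumr_ge0 => ? _; exact: sqr_ge0.
by rewrite dev sq2 sq; lra.
Qed.

Lemma sqnormc_sum_le t (z : 'I_t -> C) :
  sqnormc (\sum_i z i) <= t%:R * \sum_i sqnormc (z i).
Proof.
rewrite /sqnormc (raddf_sum (@complex.Re R)) (raddf_sum (@complex.Im R)).
by rewrite big_split /= mulrDr lerD ?sqr_sum_le.
Qed.

Definition sqfrob n (A : 'M[C]_n) : R := complex.Re (\tr (A^t* *m A)).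

Lemma sqfrobE n (A : 'M[C]_n) : sqfrob A = \sum_j \sum_k sqnormc (A j k).
Proof.
rewrite /sqfrob /mxtrace (raddf_sum (@complex.Re R)) exchange_big /=.
apply: eq_bigr => j _; rewrite mxE (raddf_sum (@complex.Re R)).
by apply: eq_bigr => k _; rewrite !mxE; exact: Re_conj_mul.
Qed.

Lemma sqfrob_ge0 n (A : 'M[C]_n) : 0 <= sqfrob A.
Proof. by rewrite sqfrobE; do 2 apply: sumr_ge0 => ? _; exact: sqnormc_ge0. Qed.

Lemma sqfrobN n (A : 'M[C]_n) : sqfrob (- A) = sqfrob A.
Proof. by rewrite /sqfrob trmxCN mulNmx mulmxN opprK. Qed.

Lemma sqfrobB_le n (A B : 'M[C]_n) : sqfrob (A - B) <= 2 * sqfrob A + 2 * sqfrob B.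
Proof.
rewrite !sqfrobE !mulr_sumr -big_split /=; apply: ler_sum => j _.
rewrite !mulr_sumr -big_split /=; apply: ler_sum => k _.
by rewrite !mxE; exact: sqnormcB_le.
Qed.

Lemma sqfrob_sum_le t n (A : 'I_t -> 'M[C]_n) :
  sqfrob (\sum_i A i) <= t%:R * \sum_i sqfrob (A i).
Proof.
under [X in _ <= _ * X]eq_bigr => i _ do rewrite sqfrobE.
rewrite sqfrobE [X in _ <= _ * X]exchange_big mulr_sumr /=; apply: ler_sum => j _.
rewrite [X in _ <= _ * X]exchange_big mulr_sumr /=; apply: ler_sum => k _.
by rewrite summxE sqnormc_sum_le.
Qed.

Lemma sqfrob_unitary n (U A : 'M[C]_n) :
  U \is unitarymx -> sqfrob (U *m A *m U^t*) = sqfrob A.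
Proof.
move=> Uu; rewrite /sqfrob !trmxC_mul trmxCK !mulmxA (mulmxKtV _ Uu) //.
by rewrite -!mulmxA mxtrace_mulC !mulmxA (mulmxKtV _ Uu).
Qed.

Lemma sqfrob_rdiag n (x : 'I_n -> R) : sqfrob (rdiag x) = \sum_j x j ^+ 2.
Proof.
rewrite sqfrobE; apply: eq_bigr => j _; rewrite (bigD1 j) //= big1 ?addr0.
  by rewrite mxE eqxx mulr1n mxE sqnormc_real.
by move=> k /negbTE kj; rewrite mxE eq_sym kj mulr0n sqnormc_real expr0n.
Qed.

Lemma sqfrob_mxfun f n (A : 'M[C]_n) :
  sqfrob (mxfun f A) = \sum_j f (eigval A j) ^+ 2.
Proof. by rewrite -sqfrob_rdiag -(sqfrob_unitary _ (spectral_unitarymx A)) mxfun_diag. Qed.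

Lemma pospart_ge0 x : 0 <= pospart x.
Proof. by rewrite /pospart; case: ifP => // /negbT; rewrite -ltNge => /ltW. Qed.

Lemma negpart_ge0 x : 0 <= negpart x.
Proof. by rewrite /negpart; case: ifP; rewrite // oppr_ge0. Qed.

Lemma pospart_sub_negpart x : pospart x - negpart x = x.
Proof. by rewrite /pospart /negpart; case: ifP => _; lra. Qed.

Lemma zeta_negpart x : zeta x = negpart x * negpart x.
Proof. by rewrite /zeta /negpart; case: ifP => _; rewrite ?mulr0 // mulrNN. Qed.

Lemma Re_tr_zeta_mx n (A : 'M[C]_n) :
  complex.Re (\tr (zeta_mx A)) = sqfrob (mxfun negpart A).
Proof.
have -> : zeta_mx A = mxfun (@zeta R) A.
  by rewrite /zeta_mx invmx_unitary ?spectral_unitarymx.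
have [/hermP Nh _] := psdmx_mxfun (fun j => negpart_ge0 (eigval A j)).
rewrite /sqfrob -Nh mxfunM; congr (complex.Re (\tr _)).
by apply: eq_mxfun => j; exact: zeta_negpart.
Qed.

Lemma psdmx_col_sqnormc_le n (A : 'M[C]_n) k :
  psdmx A -> psdmx (1%:M - A) -> \sum_j sqnormc (A j k) <= complex.Re (A k k).
Proof.
move=> A0 A1; have Ah := A0.1.
have eig0 j : 0 <= eigval A j by apply: (@mxfun_ge0 _ A id); rewrite (mxfun_id Ah).
have eig1 j : 0 <= 1 - eigval A j.
  by apply: (@mxfun_ge0 _ A (fun x => 1 - x)); rewrite -mxfunB mxfun1 (mxfun_id Ah).
have : psdmx (A - A *m A).
  have -> : A - A *m A = mxfun (fun x => x - x * x) A.
    by rewrite -mxfunB -mxfunM (mxfun_id Ah).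
  by apply: psdmx_mxfun => j; have := eig0 j; have := eig1 j; nra.
have conjA j : A k j = ((A j k)^*)%R by rewrite {1}(hermP _ Ah) !mxE.
move=> /(psdmx_diag_ge0 k); rewrite !mxE lecE /= => /andP[_].
rewrite raddfB (raddf_sum (@complex.Re R)) subr_ge0 /=.
suff -> : \sum_j complex.Re (A k j * A j k) = \sum_j sqnormc (A j k) by [].
by apply: eq_bigr => j _; rewrite conjA; exact: Re_conj_mul.
Qed.

Lemma sqr_mul_sub1_le x y : 1 <= x -> 1 <= y ->
  (x * y - 1) ^+ 2 <= ((x ^+ 2 - 1) ^+ 2 + (y ^+ 2 - 1) ^+ 2) / 2.
Proof.
move=> x1 y1; have xy0 : 0 <= x * y - 1 by nra.
have xy : x * y - 1 <= ((x ^+ 2 - 1) + (y ^+ 2 - 1)) / 2.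
  by have := sqr_ge0 (x - y); rewrite !expr2; lra.
have := sqr_ge0 ((x ^+ 2 - 1) - (y ^+ 2 - 1)); rewrite !expr2 in xy *; nra.
Qed.

Lemma sqfrob_rescale_le n (Q : 'M[C]_n) (r : 'I_n -> R) :
  Q \is hermsymmx -> (forall j, 1 <= r j) ->
  sqfrob (rdiag r *m Q *m rdiag r - Q)
    <= \sum_k (r k ^+ 2 - 1) ^+ 2 * \sum_j sqnormc (Q j k).
Proof.
move=> /hermP Qh r1; pose w k := (r k ^+ 2 - 1) ^+ 2.
have entry j k : (rdiag r *m Q *m rdiag r - Q) j k = (r j * r k - 1)%:C * Q j k.
  by rewrite /rdiag mul_diag_mx mul_mx_diag !mxE rmorphB rmorphM /=; ring.
have sym : \sum_j \sum_k w j * sqnormc (Q j k)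
    = \sum_j \sum_k w k * sqnormc (Q j k).
  rewrite exchange_big /=; apply: eq_bigr => j _; apply: eq_bigr => k _.
  by rewrite [in LHS]Qh !mxE sqnormc_conj.
have avg : \sum_j \sum_k (w j + w k) / 2 * sqnormc (Q j k)
    = \sum_j \sum_k w k * sqnormc (Q j k).
  transitivity (\sum_j \sum_k (w j * sqnormc (Q j k) / 2 + w k * sqnormc (Q j k) / 2)).
    by apply: eq_bigr => j _; apply: eq_bigr => k _; ring.
  under eq_bigr => j _ do rewrite big_split /= -!mulr_suml.
  by rewrite big_split /= -!mulr_suml sym; lra.
have rhs : \sum_k w k * \sum_j sqnormc (Q j k)
    = \sum_j \sum_k w k * sqnormc (Q j k).
  by rewrite exchange_big /=; apply: eq_bigr => k _; rewrite mulr_sumr.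
rewrite rhs -avg sqfrobE; apply: ler_sum => j _; apply: ler_sum => k _.
by rewrite entry sqnormc_realM ler_wpM2r ?sqnormc_ge0 ?sqr_mul_sub1_le.
Qed.

Lemma povm_rescale_le t n (Q : 'I_t -> 'M[C]_n) (r : 'I_n -> R) :
  (forall i, psdmx (Q i)) -> \sum_i Q i = 1%:M -> (forall j, 1 <= r j) ->
  \sum_i sqfrob (rdiag r *m Q i *m rdiag r - Q i) <= \sum_k (r k ^+ 2 - 1) ^+ 2.
Proof.
move=> Q0 Q1 r1.
have col k : \sum_i \sum_j sqnormc (Q i j k) <= 1.
  have Qc i : psdmx (1%:M - Q i).
    by rewrite -Q1 (bigD1 i) //= addrC addrK; apply: psdmx_sum => l _; exact: Q0.
  apply: (le_trans (ler_sum _ (fun i _ => psdmx_col_sqnormc_le k (Q0 i) (Qc i)))).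
  by rewrite -(raddf_sum (@complex.Re R)) -summxE Q1 mxE eqxx.
apply: (le_trans (ler_sum _ (fun i _ => sqfrob_rescale_le (Q0 i).1 r1))).
rewrite exchange_big /=; apply: ler_sum => k _.
by rewrite -mulr_sumr ler_piMr ?sqr_ge0 ?col.
Qed.

Lemma rdiag_normalization t n (Y : 'I_t -> 'M[C]_n) (r : 'I_n -> R) :
  (forall i, psdmx (Y i)) -> (forall j, 1 <= r j) ->
  \sum_i Y i = rdiag (fun j => r j ^+ 2) ->
  exists2 Q : 'I_t -> 'M[C]_n, (forall i, psdmx (Q i)) /\ \sum_i Q i = 1%:M
    & \sum_i sqfrob (Y i - Q i) <= \sum_j (r j ^+ 2 - 1) ^+ 2.
Proof.
move=> Y0 r1 sumY; pose s := rdiag (fun j => (r j)^-1).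
have r0 j : r j != 0 by rewrite gt_eqF // (lt_le_trans ltr01).
have sr : s *m rdiag r = 1%:M.
  by rewrite rdiagM -rdiag1; apply: eq_rdiag => j; rewrite mulVf.
have rs : rdiag r *m s = 1%:M.
  by rewrite rdiagM -rdiag1; apply: eq_rdiag => j; rewrite mulfV.
have Q0 i : psdmx (s *m Y i *m s).
  by rewrite -[X in _ *m X]trmxC_rdiag; exact: psdmx_congr.
have Q1 : \sum_i s *m Y i *m s = 1%:M.
  rewrite -mulmx_suml -mulmx_sumr sumY !rdiagM -rdiag1; apply: eq_rdiag => j.
  by rewrite expr2 mulrA mulVf // mul1r mulfV.
exists (fun i => s *m Y i *m s) => //.
have eY i : Y i = rdiag r *m (s *m Y i *m s) *m rdiag r.
  by rewrite !mulmxA rs mul1mx -mulmxA sr mulmx1.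
under eq_bigr => i _ do rewrite {1}eY.
exact: povm_rescale_le.
Qed.

Lemma povm_normalization t n (Y : 'I_t -> 'M[C]_n) :
  (forall i, psdmx (Y i)) -> psdmx (\sum_i Y i - 1%:M) ->
  exists2 Q : 'I_t -> 'M[C]_n, subPOVM Q
    & \sum_i sqfrob (Y i - Q i) <= sqfrob (\sum_i Y i - 1%:M).
Proof.
move=> Y0 M0; set M := \sum_i Y i - 1%:M in M0 *; have Mh := M0.1.
pose V := spectralmx M; have Vu : V \is unitarymx := spectral_unitarymx M.
have VCu : V^t* \is unitarymx by rewrite trmxC_unitary.
have eig0 j : 0 <= eigval M j by apply: (@mxfun_ge0 _ M id); rewrite (mxfun_id Mh).
pose r j := Num.sqrt (1 + eigval M j).
have r2 j : r j ^+ 2 = 1 + eigval M j by rewrite sqr_sqrtr // addr_ge0.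
have r1 j : 1 <= r j by rewrite -sqrtr1 ler_wsqrtr // lerDl.
have sumYt : \sum_i V *m Y i *m V^t* = rdiag (fun j => r j ^+ 2).
  rewrite -mulmx_suml -mulmx_sumr.
  have -> : \sum_i Y i = mxfun (fun x => 1 + x) M.
    by rewrite -mxfunD mxfun1 (mxfun_id Mh) /M addrC subrK.
  by rewrite mxfun_diag; apply: eq_rdiag => j; rewrite r2.
(* Q_i := (1 + M)^(-1/2) Y_i (1 + M)^(-1/2), built in an eigenbasis of M. *)
have [Qt [Qt0 Qt1] QtY] := rdiag_normalization (fun i => psdmx_congr V (Y0 i)) r1 sumYt.
exists (fun i => V^t* *m Qt i *m V).
  split=> [i|]; first by have := psdmx_congr (V^t*) (Qt0 i); rewrite trmxCK.
  rewrite -mulmx_suml -mulmx_sumr Qt1 mulmx1 (trmxC_unitaryV Vu) subrr.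
  exact: psdmx0.
have eYQ i :
    Y i - V^t* *m Qt i *m V = V^t* *m (V *m Y i *m V^t* - Qt i) *m V^t*^t*.
  rewrite trmxCK mulmxBr mulmxBl !mulmxA (trmxC_unitaryV Vu) mul1mx.
  by rewrite (mulmxKtV _ Vu).
have fM : sqfrob M = \sum_j eigval M j ^+ 2.
  by rewrite -[in LHS](mxfun_id Mh) sqfrob_mxfun.
under eq_bigr => i _ do rewrite eYQ (sqfrob_unitary _ VCu).
apply: (le_trans QtY); rewrite fM.
by under eq_bigr => j _ do rewrite r2 addrC addKr.
Qed.

Lemma normsq'E t n (Y Z : 'I_t -> 'M[C]_n) :
  normsq' (tup_sub Y Z) = (\sum_i sqfrob (Y i - Z i)) / n%:R.
Proof. by rewrite /normsq' mulr_suml. Qed.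

Lemma normsq'C t n (Y Z : 'I_t -> 'M[C]_n) :
  normsq' (tup_sub Y Z) = normsq' (tup_sub Z Y).
Proof. by rewrite !normsq'E; under eq_bigr => i _ do rewrite -opprB sqfrobN. Qed.

Lemma argmin_subPOVM_le t n (X RX : 'I_t -> 'M[C]_n) :
  (forall i, X i \is hermsymmx) -> \sum_i X i = 1%:M -> is_argmin_subPOVM X RX ->
  normsq' (tup_sub RX X)
    <= 2 * (t + 1)%:R / n%:R * \sum_i sqfrob (mxfun negpart (X i)).
Proof.
move=> Xh X1 [_ RXmin]; set S := \sum_i _.
pose Y i := mxfun pospart (X i); pose Z i := mxfun negpart (X i).
have eX i : X i = Y i - Z i.
  rewrite mxfunB -[LHS](mxfun_id (Xh i)); apply: eq_mxfun => j.
  by rewrite pospart_sub_negpart.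
have Y0 i : psdmx (Y i) := psdmx_mxfun (fun j => pospart_ge0 _).
have sumZ : \sum_i Y i - 1%:M = \sum_i Z i.
  by rewrite -X1 (eq_bigr _ (fun i _ => eX i)) sumrB opprB addrC subrK.
have M0 : psdmx (\sum_i Y i - 1%:M).
  rewrite sumZ; apply: psdmx_sum => i _.
  exact: psdmx_mxfun (fun j => negpart_ge0 _).
have [Q HQ YQ] := povm_normalization Y0 M0.
have XQ i : sqfrob (X i - Q i) <= 2 * sqfrob (Y i - Q i) + 2 * sqfrob (Z i).
  by rewrite eX addrAC; exact: sqfrobB_le.
have SZ : S = \sum_i sqfrob (Z i) by [].
have ZS : sqfrob (\sum_i Z i) <= t%:R * S := sqfrob_sum_le Z.
rewrite normsq'C; apply: (le_trans (RXmin Q HQ)).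
rewrite normsq'E mulrAC ler_wpM2r ?invr_ge0 //.
apply: (le_trans (ler_sum _ (fun i _ => XQ i))).
rewrite big_split /= -!mulr_sumr -SZ natrD; rewrite sumZ in YQ; lra.
Qed.

End Complex.

Theorem lemma9p2 (R : realType) (m n t : nat)
  (X : 'I_t -> 'M[R[i]]_(m ^ n))
  (hX : forall i, X i \is hermsymmx)
  (hsum : \sum_(i < t) X i = 1%:M)
  (RX : 'I_t -> 'M[R[i]]_(m ^ n))
  (hRX : is_argmin_subPOVM X RX) :
  let S := \sum_(i < t) complex.Re (\tr (zeta_mx (X i))) in
  normsq' (tup_sub RX X)
    <= 3 * (t + 1)%:R / (m ^ n)%:R * S
       + 6 * Num.sqrt (t%:R / (m ^ n)%:R * S).
Proof.
cbv zeta; set S := \sum_(i < t) _.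
have SE : S = \sum_i sqfrob (mxfun negpart (X i)).
  by apply: eq_bigr => i _; exact: Re_tr_zeta_mx.
have S0 : 0 <= S by rewrite SE sumr_ge0 // => i _; exact: sqfrob_ge0.
apply: (le_trans (argmin_subPOVM_le hX hsum hRX)); rewrite -SE.
have := sqrtr_ge0 (t%:R / (m ^ n)%:R * S).
have : 0 <= (t + 1)%:R / (m ^ n)%:R * S by rewrite mulr_ge0 ?divr_ge0.
lra.
Qed.
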